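(* Let $\mathcal{K}\subseteq\mathbb{R}^n$ be a proper convex cone with a $\nu$-LHSCB $f$ with gradient $g$, let $\mathbf{w}\in(\mathcal{K}^* )^\circ$, and let $\mathbf{x}_0\in\mathcal{K}^\circ$ with $\mathbf{w}^\top\mathbf{x}_0=1$. Let $\mathbf{e}=-\frac{g(\mathbf{x}_0)}{\nu}$ and consider the pair of problems \[\min\{\nu\mathbf{w}^\top\mathbf{x}:\ \mathbf{e}^\top\mathbf{x}=1,\ \mathbf{x}\in\mathcal{K}\},\qquad \max\{y:\ y\mathbf{e}+\mathbf{s}=\nu\mathbf{w},\ \mathbf{s}\in\mathcal{K}^*,\ y\in\mathbb{R}\}.\] Then strong duality holds between these problems with attained optimal solutions, the optimal value is positive, and there are strictly feasible solutions $(\mathbf{x},y,\mathbf{s})$ (i.e. $\mathbf{x}\in\mathcal{K}^\circ$, $\mathbf{e}^\top\mathbf{x}=1$, $\mathbf{s}\in(\mathcal{K}^* )^\circ$, $y\mathbf{e}+\mathbf{s}=\nu\mathbf{w}$) with $y=0$.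
   Context: $\mathcal{K}\subseteq\mathbb{R}^n$ is a proper (closed, convex, pointed, full-dimensional) cone with interior $\mathcal{K}^\circ$ and dual cone $\mathcal{K}^*=\{\mathbf{s}:\mathbf{s}^\top\mathbf{x}\ge0\ \forall\mathbf{x}\in\mathcal{K}\}$. A $\nu$-LHSCB for $\mathcal{K}$ is a strictly convex, three times differentiable $f:\mathcal{K}^\circ\to\mathbb{R}$ with $f(\mathbf{x})\to\infty$ at the boundary of $\mathcal{K}$, $|D^3f(\mathbf{x})[\mathbf{h},\mathbf{h},\mathbf{h}]|\le 2\,(D^2f(\mathbf{x})[\mathbf{h},\mathbf{h}])^{3/2}$, $\nu=\sup_{\mathbf{x}\in\mathcal{K}^\circ}g(\mathbf{x})^\top H(\mathbf{x})^{-1}g(\mathbf{x})<\infty$ ($H$ the Hessian), and $f(t\mathbf{x})=f(\mathbf{x})-\nu\ln t$ for $t>0$. *)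

From HB Require Import structures.
From mathcomp Require Import all_boot all_order all_algebra.
From mathcomp Require Import all_classical all_reals all_analysis.
Set Implicit Arguments. Unset Strict Implicit. Unset Printing Implicit Defensive.
Import Order.TTheory GRing.Theory Num.Theory.
Import numFieldNormedType.Exports.
Local Open Scope classical_set_scope.
Local Open Scope ring_scope.

Section Defs.
Variables (R : realType) (n : nat).
Notation vec := 'rV[R]_n.

Definition dotp (s x : vec) : R := \sum_(i < n) s 0 i * x 0 i.

Definition basisv (i : 'I_n) : vec := delta_mx 0 i.

Definition is_cone (K : set vec) := forall t x, 0 <= t -> K x -> K (t *: x).

Definition is_convex_set (K : set vec) :=
  forall x y t, K x -> K y -> 0 <= t <= 1 -> K (t *: x + (1 - t) *: y).

Definition proper_cone (K : set vec) :=
  [/\ is_cone K, closed K, is_convex_set K,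
      (forall x, K x -> K (- x) -> x = 0) & interior K !=set0].

Definition dual_cone (K : set vec) : set vec :=
  [set s | forall x, K x -> 0 <= dotp s x].

Definition D1 (f : vec -> R) (x h : vec) : R := 'D_h f x.
Definition D2 (f : vec -> R) (x h k : vec) : R := 'D_k (fun y => 'D_h f y) x.
Definition D3 (f : vec -> R) (x h k l : vec) : R :=
  'D_l (fun y => 'D_k (fun z => 'D_h f z) y) x.

Definition grad (f : vec -> R) (x : vec) : vec := \row_i D1 f x (basisv i).
Definition hess (f : vec -> R) (x : vec) : 'M[R]_n :=
  \matrix_(i, j) D2 f x (basisv i) (basisv j).

(** f is three times (Frechet) differentiable on the open set U: f, its
    directional derivatives and their directional derivatives are all
    differentiable at every point of U (in finite dimension this is exactly
    three-times differentiability). *)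
Definition thrice_differentiable (f : vec -> R) (U : set vec) :=
  forall x, U x ->
  [/\ differentiable f x,
      (forall h, differentiable (fun y => 'D_h f y) x) &
      (forall h k, differentiable (fun y => 'D_k (fun z => 'D_h f z) y) x)].

Definition nu_set (K : set vec) (f : vec -> R) : set R :=
  [set (grad f x *m invmx (hess f x) *m (grad f x)^T) 0 0 | x in interior K].

Definition is_LHSCB (K : set vec) (f : vec -> R) (nu : R) :=
  [/\ thrice_differentiable f (interior K) /\
      (forall x y t, interior K x -> interior K y -> x != y -> 0 < t < 1 ->
         f (t *: x + (1 - t) *: y) < t * f x + (1 - t) * f y),
      (forall xb, K xb -> ~ interior K xb ->
         f x @[x --> within (interior K) (nbhs xb)] --> +oo),
      (forall x h, interior K x ->
         `|D3 f x h h h| <= 2 * powR (D2 f x h h) (3%:R / 2%:R)),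
      (* nu = sup_{x in int K} g(x)^T H(x)^{-1} g(x) < oo
         (the Hessian being invertible so that H^{-1} makes sense) *)
      [/\ (forall x, interior K x -> hess f x \in unitmx),
          has_ubound (nu_set K f) &
          nu = sup (nu_set K f)] &
      (forall x t, interior K x -> 0 < t -> f (t *: x) = f x - nu * ln t)].

End Defs.

From HB Require Import structures.
From mathcomp Require Import all_boot all_order all_algebra.
From mathcomp Require Import all_classical all_reals all_analysis.
From mathcomp Require Import ring lra.
Import Order.TTheory GRing.Theory Num.Theory.
Import numFieldNormedType.Exports.
Local Open Scope classical_set_scope.
Local Open Scope ring_scope.

(* Differentiating the logarithmic homogeneity f(t x0) = f(x0) - nu ln t at
   t = 1 gives g(x0)^T x0 = -nu, i.e. e^T x0 = 1, and strict convexity on the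
   ray through x0 forces nu > 0.  Since w is interior to K^*, the base
   {x in K | w^T x = 1} is compact, so e^T x attains a maximum M >= e^T x0 = 1
   on it at some x1, and e^T x <= M w^T x on all of K.  Then x1 / M is primal
   optimal, (nu / M, nu w - (nu / M) e) is dual optimal, both with value
   nu / M > 0; the strictly feasible pair with y = 0 is (x0, nu w). *)

Section InnerProduct.
Context {R : realType} {n : nat}.
Implicit Types (s x : 'rV[R]_n) (a : R).

Lemma dotpDl s1 s2 x : dotp (s1 + s2) x = dotp s1 x + dotp s2 x.
Proof. by rewrite /dotp -big_split; apply: eq_bigr => i _; rewrite mxE mulrDl. Qed.

Lemma dotpZl a s x : dotp (a *: s) x = a * dotp s x.
Proof. by rewrite /dotp mulr_sumr; apply: eq_bigr => i _; rewrite mxE mulrA. Qed.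

Lemma dotpNl s x : dotp (- s) x = - dotp s x.
Proof. by rewrite -scaleN1r dotpZl mulN1r. Qed.

Lemma dotpBl s1 s2 x : dotp (s1 - s2) x = dotp s1 x - dotp s2 x.
Proof. by rewrite dotpDl dotpNl. Qed.

Lemma dotpZr a s x : dotp s (a *: x) = a * dotp s x.
Proof. by rewrite /dotp mulr_sumr; apply: eq_bigr => i _; rewrite mxE mulrCA. Qed.

Lemma dotp0r s : dotp s 0 = 0.
Proof. by rewrite /dotp big1 // => i _; rewrite mxE mulr0. Qed.

Lemma dotp_basisv i x : dotp (basisv R i) x = x 0 i.
Proof.
rewrite /dotp (bigD1 i) //= big1 => [|j ji]; first by rewrite mxE !eqxx mul1r addr0.
by rewrite mxE eqxx /= (negbTE ji) mul0r.
Qed.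

Lemma continuous_dotp s : continuous (dotp s).
Proof.
rewrite /dotp; elim: (index_enum _) => [|i r IH].
  by under [X in continuous X]funext do rewrite big_nil; exact: cst_continuous.
under [X in continuous X]funext do rewrite big_cons.
move=> x; apply: (@continuousD _ _ _ (fun x => s 0 i * x 0 i)); last exact: IH.
apply: (@continuousM _ _ (fun=> s 0 i) (fun x => x 0 i)).
  exact: cst_continuous.
exact: coord_continuous.
Qed.

Lemma norm_basisv_le1 i : `|basisv R i : 'rV[R]_n| <= 1.
Proof.
rewrite [leLHS]/Num.norm /= mx_normrE; apply: bigmax_le => // -[a b] _ /=.
by rewrite /basisv mxE; case: (_ && _); rewrite ?normr1 ?normr0.
Qed.

Lemma dotp_grad (f : 'rV[R]_n -> R) x v :
  differentiable f x -> dotp (grad f x) v = 'D_v f x.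
Proof.
move=> df; rewrite deriveE // {2}(row_sum_delta v) linear_sum /dotp.
apply: eq_bigr => i _; rewrite linearZ /= mxE /D1 deriveE // /basisv.
by rewrite /GRing.scale /= mulrC.
Qed.

End InnerProduct.

Lemma interior_coneZ (R : realType) n (K : set 'rV[R]_n) t x :
  is_cone K -> 0 < t -> interior K x -> interior K (t *: x).
Proof.
move=> cK t_gt0 xint; have := nbhsZ (lt0r_neq0 t_gt0) xint.
by apply: filterS => y [z Kz <-]; exact: cK (ltW t_gt0) Kz.
Qed.

Lemma dual_cone_is_cone (R : realType) n (K : set 'rV[R]_n) : is_cone (dual_cone K).
Proof. by move=> t s t_ge0 Ks x Kx; rewrite dotpZl mulr_ge0 // Ks. Qed.

Section LogHomogeneousRay.
Context {R : realType} {n : nat} {K : set 'rV[R]_n} {f : 'rV[R]_n -> R}.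
Context {nu : R} {x0 : 'rV[R]_n}.
Hypothesis hom : forall t, 0 < t -> f (t *: x0) = f x0 - nu * ln t.

Lemma derive_log_homogeneous : 'D_x0 f x0 = - nu.
Proof.
pose psi : R -> R := (- nu) \*: (@ln R).
have psi_derive : is_derive (1 : R) (1 : R) psi (- nu *: (1 : R)^-1).
  by apply: is_deriveZ; exact: is_derive1_ln.
have psi_D1 : 'D_1 psi 1 = - nu by rewrite derive_val invr1 scaler1.
rewrite /derive; apply: cvg_lim => //; rewrite -psi_D1.
apply: cvg_trans (@ex_derive _ _ _ _ _ _ _ psi_derive); apply: near_eq_cvg.
have : \forall h \near (0 : R)^', -1 < h.
  rewrite near_withinE; apply: filterS (@Nlt_nbhsl R 0 1 _) => [h hh _|].
    by rewrite ltrNl.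
  by rewrite oppr0 ltr01.
apply: filterS => h hh /=.
rewrite /psi /= -{2}[x0]scale1r -scalerDl hom; last by rewrite -ltrBlDr sub0r.
rewrite ln1 scaler0 subr0 /GRing.scale /= mulr1; congr (_ * _); ring.
Qed.

Lemma log_homogeneous_param_gt0 :
  is_cone K -> interior K x0 -> x0 != 0 ->
  (forall x y t, interior K x -> interior K y -> x != y -> 0 < t < 1 ->
     f (t *: x + (1 - t) *: y) < t * f x + (1 - t) * f y) ->
  0 < nu.
Proof.
move=> cK x0int x0n0 sc.
have x0int2 : interior K (2 *: x0) by apply: interior_coneZ.
have x0_neq2 : x0 != 2 *: x0.
  apply: contra x0n0 => /eqP x0E.
  have : (2 - 1 : R) *: x0 == 0 by rewrite scalerBl scale1r -x0E subrr.
  by rewrite scaler_eq0 (_ : 2 - 1 = 1 :> R) ?oner_eq0 //; lra.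
have half01 : 0 < (2 : R)^-1 < 1 by apply/andP; split; lra.
have := sc _ _ _ x0int x0int2 x0_neq2 half01.
rewrite scalerA -{1}[x0]scale1r scalerA -scalerDl.
rewrite (_ : 2^-1 * 1 + (1 - 2^-1) * 2 = 3 / 2 :> R); last by lra.
rewrite !hom; [|lra|lra].
(* 2 ln(3/2) - ln 2 = ln(9/8) > 0 *)
have ln_gap : ln (2 : R) < 2 * ln (3 / 2).
  rewrite mulr_natl -lnXn; last by lra.
  by rewrite ltr_ln ?posrE ?expr2; lra.
nra.
Qed.

End LogHomogeneousRay.

Section ConeBase.
Context {R : realType} {n : nat} {K : set 'rV[R]_n} {w : 'rV[R]_n}.
Hypothesis wint : interior (dual_cone K) w.

Lemma interior_dual_cone_coord_bound :
  exists2 c, 0 < c & forall x, K x -> forall i, c * `|x 0 i| <= dotp w x.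
Proof.
move: wint => /nbhs_ballP [eps /= eps0 ball_dual]; exists (eps / 2); first lra.
move=> x Kx i.
have perturb a : `|a| <= eps / 2 -> dual_cone K (w - a *: basisv R i).
  move=> ha; apply: ball_dual; rewrite -ball_normE /= opprB addrC subrK.
  rewrite normrZ (le_lt_trans (y := eps / 2 * 1)) //; last lra.
  by apply: ler_pM => //; exact: norm_basisv_le1.
have half_norm : `|eps / 2| <= eps / 2 by rewrite ger0_norm //; lra.
have := perturb _ half_norm x Kx; rewrite -normrN in half_norm.
have := perturb _ half_norm x Kx; rewrite !dotpBl !dotpZl !dotp_basisv.
by case: (lerP 0 (x 0 i)) => [/ger0_norm | /ltr0_norm] ->; lra.
Qed.

Lemma interior_dual_cone_dotp_eq0 x : K x -> dotp w x = 0 -> x = 0.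
Proof.
have [c c0 bound] := interior_dual_cone_coord_bound.
move=> Kx wx_eq0; apply/rowP => i; rewrite mxE; apply/eqP; rewrite -normr_le0.
by have := bound x Kx i; rewrite wx_eq0 pmulr_rle0.
Qed.

Lemma compact_cone_base : closed K -> compact [set x | K x /\ dotp w x = 1].
Proof.
move=> clK; have [c c0 bound] := interior_dual_cone_coord_bound.
apply: bounded_closed_compact.
  exists c^-1; split; first by rewrite realE invr_ge0 ltW.
  move=> r cr x [Kx wx] /=; rewrite [leLHS]/Num.norm /= mx_normrE.
  apply: bigmax_le => [|[a b] _ /=].
    by apply: le_trans (ltW cr); rewrite invr_ge0 ltW.
  rewrite ord1; apply: le_trans (ltW cr).
  by rewrite -(ler_pM2l c0) mulfV ?gt_eqF // -wx; exact: bound.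
apply: (closedI clK).
by have := (continuous_closedP _).1 (continuous_dotp w) _ (@closed_eq _ 1).
Qed.

Lemma cone_base_argmax (e x0 : 'rV[R]_n) :
  is_cone K -> closed K -> K x0 -> dotp w x0 = 1 ->
  exists2 x1, K x1 /\ dotp w x1 = 1 &
    forall x, K x -> dotp e x <= dotp e x1 * dotp w x.
Proof.
move=> cK clK x0K wx0.
have base0 : [set x | K x /\ dotp w x = 1] !=set0 by exists x0.
have [x1 /set_mem [x1K wx1] x1max] := compact_EVT_max base0
  (compact_cone_base clK) (continuous_subspaceT (continuous_dotp e)).
exists x1 => // x Kx; have [wx_eq0|wx_neq0] := eqVneq (dotp w x) 0.
  by rewrite wx_eq0 mulr0 (interior_dual_cone_dotp_eq0 _ Kx wx_eq0) dotp0r.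
have wx_gt0 : 0 < dotp w x.
  by rewrite lt_def wx_neq0; exact: interior_subset wint x Kx.
have : [set x | K x /\ dotp w x = 1] ((dotp w x)^-1 *: x).
  by split; [apply: cK; rewrite ?invr_ge0 ?ltW | rewrite dotpZr mulVf].
move/mem_set/x1max; rewrite dotpZr => ratio_le.
by rewrite -[dotp e x](mulVKf wx_neq0) [leLHS]mulrC ler_pM2r.
Qed.

End ConeBase.

Section NormalizedDuality.
Context {R : realType} {n : nat} {K : set 'rV[R]_n} {w e x1 : 'rV[R]_n} {nu : R}.
Hypotheses (nu_gt0 : 0 < nu) (x1K : K x1) (wx1 : dotp w x1 = 1).
Hypothesis ratio_le : forall x, K x -> dotp e x <= dotp e x1 * dotp w x.
Hypothesis ex1_gt0 : 0 < dotp e x1.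
Let M := dotp e x1.

Lemma normalized_primal_optimal x :
  K x -> dotp e x = 1 -> nu * dotp w (M^-1 *: x1) <= nu * dotp w x.
Proof.
move=> Kx ex_eq1; apply: ler_wpM2l; first exact: ltW.
rewrite dotpZr wx1 mulr1 -[dotp w x](mulKf (lt0r_neq0 ex1_gt0)).
by rewrite -{1}[M^-1]mulr1 ler_pM2l ?invr_gt0 // -ex_eq1; exact: ratio_le.
Qed.

Lemma normalized_dual_feasible : dual_cone K (nu *: w - (nu / M) *: e).
Proof.
move=> x Kx; rewrite dotpBl !dotpZl subr_ge0.
apply: le_trans (ler_wpM2l _ (ratio_le x Kx)) _; first by rewrite divr_ge0 // ltW.
by rewrite mulrA divfK // gt_eqF.
Qed.

Lemma normalized_dual_optimal y s :
  y *: e + s = nu *: w -> dual_cone K s -> y <= nu / M.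
Proof.
move=> feas sK; have := sK _ x1K.
rewrite (canRL (addKr _) feas) dotpDl dotpNl !dotpZl wx1 mulr1 addrC subr_ge0.
by rewrite ler_pdivlMr.
Qed.

End NormalizedDuality.

Theorem lemma3p2 (R : realType) (n : nat) (K : set 'rV[R]_n)
  (f : 'rV[R]_n -> R) (nu : R) (w x0 : 'rV[R]_n) :
  proper_cone K -> is_LHSCB K f nu ->
  interior (dual_cone K) w -> interior K x0 -> dotp w x0 = 1 ->
  let e := - (nu^-1 *: grad f x0) in
  (* strong duality, both optima attained, positive optimal value *)
  (exists (xs : 'rV[R]_n) (ys : R) (ss : 'rV[R]_n),
     [/\ K xs /\ dotp e xs = 1,
         ys *: e + ss = nu *: w /\ dual_cone K ss,
         (forall x, K x -> dotp e x = 1 -> nu * dotp w xs <= nu * dotp w x),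
         (forall y s, y *: e + s = nu *: w -> dual_cone K s -> y <= ys) &
         nu * dotp w xs = ys /\
         0 < ys]) /\
  (* strictly feasible primal and dual solutions with y = 0 *)
  (exists (x : 'rV[R]_n) (s : 'rV[R]_n),
     [/\ interior K x, dotp e x = 1,
         interior (dual_cone K) s & 0 *: e + s = nu *: w]).
Proof.
move=> [cK clK _ _ _] [[td sc] _ _ _ hom] wint x0int wx0 e.
have x0K := interior_subset x0int.
have x0_neq0 : x0 != 0 by apply: contra_eqN wx0 => /eqP->; rewrite dotp0r eq_sym oner_eq0.
have nu_gt0 := log_homogeneous_param_gt0 (hom x0 ^~ x0int) cK x0int x0_neq0 sc.
have [dfx0 _ _] := td x0 x0int.
have ex0 : dotp e x0 = 1.
  rewrite dotpNl dotpZl dotp_grad // (derive_log_homogeneous (hom x0 ^~ x0int)).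
  by rewrite mulrN opprK mulVf // gt_eqF.
have [x1 [x1K wx1] ratio_le] := cone_base_argmax wint e x0 cK clK x0K wx0.
have ex1_gt0 : 0 < dotp e x1 by have := ratio_le _ x0K; rewrite ex0 wx0 mulr1; lra.
split.
  exists ((dotp e x1)^-1 *: x1), (nu / dotp e x1), (nu *: w - (nu / dotp e x1) *: e).
  split; [split| split| | |split].
  - by apply: cK => //; rewrite invr_ge0 ltW.
  - by rewrite dotpZr mulVf // gt_eqF.
  - by rewrite addrC subrK.
  - exact: normalized_dual_feasible nu_gt0 ratio_le ex1_gt0.
  - exact: normalized_primal_optimal nu_gt0 wx1 ratio_le ex1_gt0.
  - exact: normalized_dual_optimal x1K wx1 ex1_gt0.
  - by rewrite dotpZr wx1 mulr1 mulrC.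
  - by rewrite divr_gt0.
exists x0, (nu *: w); split => //; last by rewrite scale0r add0r.
by apply: interior_coneZ => //; exact: dual_cone_is_cone.
Qed.
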